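(* Let $\kappa\geq 1$ be a cardinal and let $(S,\mu)$ be a multisemigroup with multiplicities bounded by $\kappa$. Let $S^\diamond$ be the set of all words in the alphabet $S$ of length at least two, and let $\overline{\mu}:S^\diamond\to \mathcal{B}_\kappa(S)$ be defined recursively by $\overline{\mu}_{st}=\mu_{s,t}$ for $s,t\in S$, and, for $w=sx$ with $s\in S$ and $x$ a word of length at least two, $$\overline{\mu}_w(t)=\sum_{a\in S}\overline{\mu}_x(a)\,\mu_{s,a}(t)\qquad (t\in S).$$ Then, for every $w\in S^\diamond$ of the form $w=xs$, where $s\in S$ and $x$ is a word of length at least two, we have $$\overline{\mu}_w(t)=\sum_{a\in S}\overline{\mu}_x(a)\,\mu_{a,s}(t)\qquad\text{for all } t\in S.$$
   Context: For a cardinal $\kappa\geq 1$, $\mathrm{Card}_\kappa$ denotes the set of all cardinals not greater than $\kappa$, made into a complete semiring: the sum of any family of elements is the cardinal sum (disjoint union) and the product is the cardinal product (Cartesian product), in both cases with the convention that any cardinal greater than $\kappa$ is identified with $\kappa$. For a set $X$, $\mathcal{B}_\kappa(X)$ is the set of all functions $X\to\mathrm{Card}_\kappa$ (with pointwise operations). For a cardinal $\lambda\le\kappa$ and a function $\nu:S\to\mathrm{Card}_\kappa$, $\lambda\nu$ denotes the sum of $\lambda$ copies of $\nu$ (computed pointwise in $\mathrm{Card}_\kappa$). A multisemigroup with multiplicities bounded by $\kappa$ is a pair $(S,\mu)$ where $S$ is a non-empty set and $\mu:S\times S\to\mathcal{B}_\kappa(S)$, $(s,t)\mapsto\mu_{s,t}$,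 satisfies, for all $r,s,t\in S$, the equality of functions $S\to\mathrm{Card}_\kappa$ $$\sum_{i\in S}\mu_{s,t}(i)\,\mu_{r,i}=\sum_{j\in S}\mu_{r,s}(j)\,\mu_{j,t}.$$ *)

From mathcomp Require Import all_boot.
Set Implicit Arguments. Unset Strict Implicit. Unset Printing Implicit Defensive.

(* Cardinals are represented by types.  A cardinal kappa >= 1 is a nonempty
   type K.  Cardinal sum over a family = sigma type, cardinal product = product
   type.  The semiring Card_kappa (cardinals > kappa identified with kappa) is
   the quotient of cardinals by the congruence [ceq K]: two cardinals are equal
   in Card_kappa iff they are equinumerous or both are >= kappa. *)

Definition card_le (A B : Type) : Prop := exists f : A -> B, injective f.
Definition card_eq (A B : Type) : Prop := exists f : A -> B, bijective f.

Definition ceq (K A B : Type) : Prop :=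
  card_eq A B \/ (card_le K A /\ card_le K B).

(* multiplicities: mu s t u = mu_{s,t}(u) *)
Definition multisemigroup (K S : Type) (mu : S -> S -> S -> Type) : Prop :=
  inhabited S /\
  (forall s t u, card_le (mu s t u) K) /\
  (forall r s t u,
     ceq K {i : S & (mu s t i * mu r i u)%type}
           {j : S & (mu r s j * mu j t u)%type}).

(* mubar a rest = \overline{mu}_{a :: rest}, defined for rest nonempty
   (junk value Empty_set for the one-letter word):
   mubar_{st} = mu_{s,t};  mubar_{s x}(t) = sum_c mubar_x(c) mu_{s,c}(t). *)
Fixpoint mubar (S : Type) (mu : S -> S -> S -> Type) (a : S) (rest : seq S)
  : S -> Type :=
  match rest with
  | [::] => fun _ => Empty_set
  | b :: rest' =>
      match rest' with
      | [::] => mu a b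
      | _ :: _ => fun t => {c : S & (mubar mu b rest' c * mu a c t)%type}
      end
  end.

From mathcomp Require Import all_boot.
From Stdlib Require Import Classical ClassicalEpsilon Eqdep.

Set Implicit Arguments.
Unset Strict Implicit.

(* Induction on the length of [x]: peel off the first letter [a] of [w = a y s],
   apply the induction hypothesis to [y s], and move [a] past the sum using the
   associativity axiom of [mu]; the remaining steps are the bijections
   expressing distributivity of products over sums in [Card_kappa]. *)

Lemma card_le_trans A B C : card_le A B -> card_le B C -> card_le A C.
Proof. by move=> [f f_inj] [g g_inj]; exists (g \o f); apply: inj_comp. Qed.

Lemma card_eq_card_le A B : card_eq A B -> card_le A B.
Proof. by move=> [f f_bij]; exists f; apply: bij_inj. Qed.

Lemma card_eq_refl A : card_eq A A.
Proof. by exists id; exists id. Qed.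

Lemma card_eq_sym A B : card_eq A B -> card_eq B A.
Proof. by move=> [f [g fK gK]]; exists g; exists f. Qed.

Lemma card_eq_trans A B C : card_eq A B -> card_eq B C -> card_eq A C.
Proof. by move=> [f f_bij] [g g_bij]; exists (g \o f); apply: bij_comp. Qed.

Lemma card_eq_uninhabited A B :
  ~ inhabited A -> ~ inhabited B -> card_eq A B.
Proof.
move=> nA nB; exists (fun x => match nA (inhabits x) with end).
exists (fun y => match nB (inhabits y) with end).
- by move=> x; case: (nA (inhabits x)).
- by move=> y; case: (nB (inhabits y)).
Qed.

Lemma card_eq_prod A A' B B' :
  card_eq A A' -> card_eq B B' -> card_eq (A * B) (A' * B').
Proof.
move=> [f [g fK gK]] [h [k hK kK]].
exists (fun p => (f p.1, h p.2)); exists (fun p => (g p.1, k p.2)).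
- by case=> x y /=; rewrite fK hK.
- by case=> x y /=; rewrite gK kK.
Qed.

Lemma card_eq_prodC A B : card_eq (A * B) (B * A).
Proof. by exists (fun p => (p.2, p.1)); exists (fun p => (p.2, p.1)); case. Qed.

Lemma card_le_prodr A B C : B -> card_le A C -> card_le A (B * C).
Proof. by move=> b [f f_inj]; exists (fun x => (b, f x)) => x y [] /f_inj. Qed.

Lemma card_le_sigT A I (F : I -> Type) i : card_le A (F i) -> card_le A {j : I & F j}.
Proof.
move=> [f f_inj]; exists (fun x => existT F i (f x)) => x y fx_fy.
exact/f_inj/(inj_pairT2 _ _ _ _ _ fx_fy).
Qed.

Lemma card_eq_sigT I (F G : I -> Type) :
  (forall i, card_eq (F i) (G i)) -> card_eq {i : I & F i} {i : I & G i}.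
Proof.
move=> FG.
pose f i := sval (constructive_indefinite_description _ (FG i)).
have f_bij i : bijective (f i) := svalP (constructive_indefinite_description _ _).
have inv i : {g | cancel (f i) g /\ cancel g (f i)}.
  by apply: constructive_indefinite_description; case: (f_bij i) => g; exists g.
exists (fun p => existT G (projT1 p) (f _ (projT2 p))).
exists (fun p => existT F (projT1 p) (sval (inv _) (projT2 p))).
- by case=> i x /=; rewrite (proj1 (svalP (inv i))).
- by case=> i y /=; rewrite (proj2 (svalP (inv i))).
Qed.

Lemma card_eq_sigT_prodA I J (X : I -> Type) (Y : I -> J -> Type) (Z : J -> Type) :
  card_eq {d : J & ({e : I & (X e * Y e d)%type} * Z d)%type}
          {e : I & (X e * {d : J & (Y e d * Z d)%type})%type}.
Proof.
exists (fun p => let: existT d (existT e (x, y), z) := p in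
                 existT _ e (x, existT _ d (y, z))).
exists (fun p => let: existT e (x, existT d (y, z)) := p in
                 existT _ d (existT _ e (x, y), z)).
- by case=> d [[e [x y]] z].
- by case=> e [x [d [y z]]].
Qed.

Section CardinalEquality.
Variable K : Type.

Lemma card_eq_ceq A B : card_eq A B -> ceq K A B.
Proof. by left. Qed.

Lemma ceq_trans A B C : ceq K A B -> ceq K B C -> ceq K A C.
Proof.
case=> [AB|[KA KB]]; case=> [BC|[KB' KC]].
- by left; apply: card_eq_trans BC.
- right; split=> //; apply: card_le_trans KB' _.
  exact/card_eq_card_le/card_eq_sym.
- by right; split=> //; apply: card_le_trans KB _; apply: card_eq_card_le.
- by right.
Qed.

Lemma ceq_sigT I (F G : I -> Type) :
  (forall i, ceq K (F i) (G i)) -> ceq K {i : I & F i} {i : I & G i}.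
Proof.
move=> FG.
have [[i [KF KG]]|no_big] :=
  classic (exists i, card_le K (F i) /\ card_le K (G i)).
  by right; split; apply: card_le_sigT; [exact: KF | exact: KG].
left; apply: card_eq_sigT => i.
by case: (FG i) => // big; case: no_big; exists i.
Qed.

Lemma ceq_prod_eql A A' B B' :
  card_eq A A' -> ceq K B B' -> ceq K (A * B) (A' * B').
Proof.
move=> AA' [BB'|[KB KB']]; first by left; apply: card_eq_prod.
have [[x]|nA] := classic (inhabited A).
  have [f [g _ _]] := AA'.
  by right; split; apply: card_le_prodr; [exact: x | | exact: f x |].
have nA' : ~ inhabited A'.
  by move=> [y]; apply: nA; have [f [g _ _]] := AA'; exists; apply: g y.
by left; apply: card_eq_uninhabited => [[[x _]]|[[y _]]]; [apply: nA | apply: nA'].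
Qed.

Lemma ceq_prod_eqr A A' B B' :
  ceq K A A' -> card_eq B B' -> ceq K (A * B) (A' * B').
Proof.
move=> AA' BB'; apply: (@ceq_trans _ (B * A)); first exact/card_eq_ceq/card_eq_prodC.
apply: (@ceq_trans _ (B' * A')); first exact: ceq_prod_eql.
exact/card_eq_ceq/card_eq_prodC.
Qed.

End CardinalEquality.

Lemma mubar_cons S (mu : S -> S -> S -> Type) a b c l t :
  mubar mu a [:: b, c & l] t = {d : S & (mubar mu b (c :: l) d * mu a d t)%type}.
Proof. by []. Qed.

(* [hK] is unused: the statement holds for [K] empty as well. *)
Theorem proposition5 (K S : Type) (mu : S -> S -> S -> Type)
  (hK : inhabited K) (hmu : multisemigroup K mu)
  (a b : S) (l : seq S) (s t : S) :
  ceq K (mubar mu a (rcons (b :: l) s) t)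
        {c : S & (mubar mu a (b :: l) c * mu c s t)%type}.
Proof.
have [_ [_ mu_assoc]] := hmu.
elim: l a b t => [|c l IH] a b t; first exact: mu_assoc.
rewrite rcons_cons [rcons _ s]rcons_cons !mubar_cons -rcons_cons.
have push_IH := ceq_sigT (fun d => ceq_prod_eqr (IH b c d) (card_eq_refl (mu a d t))).
apply: ceq_trans push_IH _.
apply: ceq_trans (card_eq_ceq _ (card_eq_sigT_prodA _ _ _)) _.
have reassoc e := ceq_prod_eql (card_eq_refl (mubar mu b (c :: l) e)) (mu_assoc a e s t).
apply: ceq_trans (ceq_sigT reassoc) _.
exact/card_eq_ceq/card_eq_sym/card_eq_sigT_prodA.
Qed.
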